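(* $E^{ce}_{\max}$ is not binarily reducible to $E^{ce}_{\min}$ (i.e. $E^{ce}_{\max}\not\leq_c^2E^{ce}_{\min}$). However, $E^{ce}_{\min}$ is finitarily reducible to $E^{ce}_{\max}$ (i.e. $E^{ce}_{\min}\leq_c^{<\omega}E^{ce}_{\max}$).
   Context: $W_e$ is the $e$-th c.e. set. $i\,E^{ce}_{\min}\,j\iff\min(W_i)=\min(W_j)$ and $i\,E^{ce}_{\max}\,j\iff\max(W_i)=\max(W_j)$, where the empty set has minimum $+\infty$ and maximum $-\infty$, and all infinite sets have maximum $+\infty$. For equivalence relations $E,F$ on $\omega$ and $n\ge1$, $E\leq_c^nF$ means there is a total computable function mapping each $(x_0,\dots,x_{n-1})\in\omega^n$ to $(y_0,\dots,y_{n-1})\in\omega^n$ with $x_i\,E\,x_j\iff y_i\,F\,y_j$ for all $i<j<n$; $E\leq_c^{<\omega}F$ means such functions exist uniformly in $n$ (one computable function taking $n$ and an $n$-tuple). *)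

From Stdlib Require Import Arith List.
Import ListNotations.

Inductive prog : Type :=
| pzero : prog
| psucc : prog
| pproj : nat -> prog
| pcomp : prog -> list prog -> prog
| prec  : prog -> prog -> prog
| pmu   : prog -> prog.

Inductive eval : prog -> list nat -> nat -> Prop :=
| ev_zero : forall v, eval pzero v 0
| ev_succ : forall x v, eval psucc (x :: v) (S x)
| ev_proj : forall i v, i < length v -> eval (pproj i) v (nth i v 0)
| ev_comp : forall f gs v ys y,
    evals gs v ys -> eval f ys y -> eval (pcomp f gs) v y
| ev_rec0 : forall f g v y, eval f v y -> eval (prec f g) (0 :: v) y
| ev_recS : forall f g n v y z,
    eval (prec f g) (n :: v) y -> eval g (n :: y :: v) z ->
    eval (prec f g) (S n :: v) z
| ev_mu : forall f v n,
    eval f (n :: v) 0 ->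
    (forall m, m < n -> exists k, eval f (m :: v) (S k)) ->
    eval (pmu f) v n
with evals : list prog -> list nat -> list nat -> Prop :=
| evs_nil : forall v, evals [] v []
| evs_cons : forall g gs v y ys,
    eval g v y -> evals gs v ys -> evals (g :: gs) v (y :: ys).

Definition cpair (x y : nat) : nat := (x + y) * (x + y + 1) / 2 + y.

Fixpoint code (p : prog) : nat :=
  match p with
  | pzero => cpair 0 0
  | psucc => cpair 1 0
  | pproj i => cpair 2 i
  | pcomp f gs =>
      cpair 3 (cpair (code f)
        ((fix cl (l : list prog) : nat :=
            match l with
            | [] => 0
            | g :: l' => S (cpair (code g) (cl l'))
            end) gs))
  | prec f g => cpair 4 (cpair (code f) (code g))
  | pmu f => cpair 5 (code f)
  end.

Fixpoint code_nats (l : list nat) : nat :=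
  match l with
  | [] => 0
  | x :: l' => S (cpair x (code_nats l'))
  end.

(* W_e : the e-th c.e. set = domain of the unary program with code e
   (empty if e codes no program). *)
Definition W (e x : nat) : Prop :=
  exists p, code p = e /\ exists y, eval p [x] y.

Inductive ext : Type := MInf | Fin (n : nat) | PInf.

Definition minW (e : nat) (v : ext) : Prop :=
  match v with
  | Fin m => W e m /\ forall k, W e k -> m <= k
  | PInf => forall k, ~ W e k
  | MInf => False
  end.

Definition maxW (e : nat) (v : ext) : Prop :=
  match v with
  | Fin m => W e m /\ forall k, W e k -> k <= m
  | PInf => forall n, exists k, n <= k /\ W e k
  | MInf => forall k, ~ W e k
  end.

Definition E_min (i j : nat) : Prop := exists v, minW i v /\ minW j v.
Definition E_max (i j : nat) : Prop := exists v, maxW i v /\ maxW j v.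

Definition computable2 (f : nat -> nat -> nat) : Prop :=
  exists p, forall x y, eval p [x; y] (f x y).

Definition red2 (E F : nat -> nat -> Prop) : Prop :=
  exists f g : nat -> nat -> nat,
    computable2 f /\ computable2 g /\
    forall x0 x1, E x0 x1 <-> F (f x0 x1) (g x0 x1).

(* E <=_c^{<omega} F : one total computable function which, given any
   n-tuple (a list of length n, coded as a number), returns an n-tuple
   reducing E to F on all pairs of coordinates. *)
Definition red_fin (E F : nat -> nat -> Prop) : Prop :=
  exists G : list nat -> list nat,
    (exists p, forall l, eval p [code_nats l] (code_nats (G l))) /\
    forall l, length (G l) = length l /\
      forall i j, i < j -> j < length l ->
        (E (nth i l 0) (nth j l 0) <-> F (nth i (G l) 0) (nth j (G l) 0)).

(* Everything rests on a Kleene T-predicate: [W e x] holds iff some number codes a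
   certificate, checkable by a primitive recursive program, of a derivation that program [e]
   halts on [x].  Hence the minimum of [W e] is approximated by a computable [min_approx e s]
   that changes finitely often, and the range of a computable function is uniformly c.e.

   Against a binary reduction [(f, g)] of [E_max] to [E_min], the recursion theorem gives
   indices [e0], [e1] whose sets enumerate, at stage [s], twice the last stage at which the
   approximations to [min W u] and [min W v] changed, where [u = f e0 e1] and [v = g e0 e1],
   and [e0] enumerates one more whenever these approximations agree.  Both sets are finite,
   and [max W e0 = max W e1] exactly when the final minima differ.

   For the finitary reduction of [E_min] to [E_max], the [i]-th output set for inputs
   [c_0, ..., c_(n-1)] enumerates at stage [s] the value [L * n + r], where [L] is the last
   change of the approximations to all the minima and [r] is the current rank of the
   approximation to [min W c_i] among them.  Its maximum is [L * n] plus the final rank, and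
   two ranks agree iff the minima do. *)

From Stdlib Require Import Arith List Lia Bool Classical.
Import ListNotations.

Lemma eval_det : forall p v y, eval p v y -> forall y', eval p v y' -> y = y'
with evals_det : forall gs v ys, evals gs v ys -> forall ys', evals gs v ys' -> ys = ys'.
Proof.
  - intros p v y H; destruct H; intros y' H'; inversion H'; subst; auto.
    + assert (ys = ys0) by (eapply evals_det; eauto). subst. eapply eval_det; eauto.
    + eapply eval_det; eauto.
    + assert (y = y0) by (eapply eval_det; eauto). subst. eapply eval_det; eauto.
    + match goal with Hz : eval f (y' :: v) 0, Hall : forall m, m < y' -> _ |- _ =>
        destruct (lt_eq_lt_dec n y') as [[Hl|He]|Hl]; auto;
        [ destruct (Hall n Hl) as [k Hk]; pose proof (eval_det _ _ _ H _ Hk)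
        | destruct (H0 y' Hl) as [k Hk]; pose proof (eval_det _ _ _ Hk _ Hz) ]; discriminate end.
  - intros gs v ys H; destruct H; intros ys' H'; inversion H'; subst; auto.
    f_equal; [eapply eval_det|eapply evals_det]; eauto.
Qed.

Lemma exists_least (P : nat -> Prop) :
  (exists k, P k) -> exists m, P m /\ forall k, k < m -> ~ P k.
Proof.
  intros [k Hk]. induction k as [k IH] using (well_founded_induction lt_wf).
  destruct (classic (exists j, j < k /\ P j)) as [[j [Hj Pj]]|Hn].
  - exact (IH j Hj Pj).
  - exists k. split; auto. intros j Hj Pj. apply Hn; eauto.
Qed.

(** * Cantor pairing and codes *)

Fixpoint triangle (n : nat) : nat := match n with 0 => 0 | S k => triangle k + S k end.

Lemma double_triangle n : 2 * triangle n = n * (n + 1).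
Proof. induction n; simpl triangle; nia. Qed.

Lemma cpair_triangle x y : cpair x y = triangle (x + y) + y.
Proof.
  unfold cpair. f_equal. rewrite <- double_triangle, Nat.mul_comm. apply Nat.div_mul. lia.
Qed.

Lemma triangle_mono a b : a <= b -> triangle a <= triangle b.
Proof. induction 1; simpl; lia. Qed.

Lemma cpair_inj x y x' y' : cpair x y = cpair x' y' -> x = x' /\ y = y'.
Proof.
  rewrite !cpair_triangle. intros H.
  assert (x + y = x' + y').
  { destruct (lt_eq_lt_dec (x + y) (x' + y')) as [[Hl|He]|Hl]; auto;
      [pose proof (triangle_mono _ _ Hl) | pose proof (triangle_mono _ _ Hl)]; simpl in *; lia. }
  rewrite H0 in H. lia.
Qed.

Lemma cpair_ge x y : x <= cpair x y /\ y <= cpair x y.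
Proof.
  rewrite cpair_triangle. assert (x + y <= triangle (x + y)) by (induction (x + y); simpl; lia).
  lia.
Qed.

Lemma cpair_surj n : exists x y, cpair x y = n.
Proof.
  induction n as [|n [x [y H]]].
  - exists 0, 0. reflexivity.
  - rewrite cpair_triangle in H. destruct x.
    + exists (S y), 0. rewrite cpair_triangle, !Nat.add_0_r. simpl in *. lia.
    + exists x, (S y). rewrite cpair_triangle. replace (x + S y) with (S x + y) by lia. lia.
Qed.

Fixpoint code_progs (l : list prog) : nat :=
  match l with [] => 0 | g :: l' => S (cpair (code g) (code_progs l')) end.

Lemma code_pcomp f gs : code (pcomp f gs) = cpair 3 (cpair (code f) (code_progs gs)).
Proof. reflexivity. Qed.

Lemma code_inj : forall p q, code p = code q -> p = q.
Proof.
  fix IH 1. intros p q H. destruct p, q; rewrite ?code_pcomp in H; simpl in H;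
    try (apply cpair_inj in H as [H _]; discriminate H); try reflexivity;
    apply cpair_inj in H as [_ H].
  - now subst.
  - apply cpair_inj in H as [Hf Hgs]. apply IH in Hf. subst. f_equal.
    revert l0 Hgs. induction l; destruct l0; simpl; intros H; try discriminate; auto.
    injection H as H. apply cpair_inj in H as [Ha Hb]. apply IH in Ha. subst. f_equal. auto.
  - apply cpair_inj in H as [Hf Hg]. apply IH in Hf. apply IH in Hg. now subst.
  - apply IH in H. now subst.
Qed.

Lemma code_progs_inj l l' : code_progs l = code_progs l' -> l = l'.
Proof.
  revert l'. induction l; destruct l'; simpl; intros H; try discriminate; auto.
  injection H as H. apply cpair_inj in H as [Ha Hb]. apply code_inj in Ha. subst. f_equal. auto.
Qed.

Lemma code_nats_inj l l' : code_nats l = code_nats l' -> l = l'.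
Proof.
  revert l'. induction l; destruct l'; simpl; intros H; try discriminate; auto.
  injection H as H. apply cpair_inj in H as [Ha Hb]. subst. f_equal. auto.
Qed.

Lemma code_nats_surj n : exists l, code_nats l = n.
Proof.
  induction n as [n IH] using (well_founded_induction lt_wf). destruct n.
  - exists []. reflexivity.
  - destruct (cpair_surj n) as [x [y H]]. destruct (IH y) as [l Hl].
    { pose proof (cpair_ge x y). lia. }
    exists (x :: l). simpl. now rewrite Hl, H.
Qed.

Lemma code_nats_ge l : length l <= code_nats l.
Proof. induction l; simpl; auto. pose proof (cpair_ge a (code_nats l)). lia. Qed.

(** * Computable functions *)

Definition computable (n : nat) (f : list nat -> nat) : Prop :=
  exists p, forall v, length v = n -> eval p v (f v).

Lemma computable_ext n f g :
  computable n f -> (forall v, length v = n -> f v = g v) -> computable n g.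
Proof. intros [p Hp] H. exists p. intros v Hv. rewrite <- H; auto. Qed.

Lemma computable_proj n i : i < n -> computable n (fun v => nth i v 0).
Proof. intros H. exists (pproj i). intros v Hv. constructor. lia. Qed.

Fixpoint const_prog (k : nat) : prog :=
  match k with 0 => pzero | S k' => pcomp psucc [const_prog k'] end.

Lemma eval_const_prog k v : eval (const_prog k) v k.
Proof.
  induction k; simpl; repeat econstructor; apply IHk.
Qed.

Lemma computable_const n k : computable n (fun _ => k).
Proof. exists (const_prog k). intros. apply eval_const_prog. Qed.

Lemma computable_succ n a : computable n a -> computable n (fun v => S (a v)).
Proof.
  intros [p Hp]. exists (pcomp psucc [p]). intros v Hv. repeat econstructor. auto.
Qed.

Lemma computable_comp n m g fs :
  computable m g -> Forall (computable n) fs -> length fs = m ->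
  computable n (fun v => g (map (fun h => h v) fs)).
Proof.
  intros [pg Hg] Hf Hl.
  assert (exists ps, forall v, length v = n -> evals ps v (map (fun h => h v) fs)) as [ps Hps].
  { clear Hl. induction Hf as [|f fs [p Hp] _ [ps Hps]].
    - exists []. constructor.
    - exists (p :: ps). simpl. constructor; auto. }
  exists (pcomp pg ps). intros v Hv. econstructor; [apply Hps; auto|].
  apply Hg. now rewrite length_map.
Qed.

Class Computable1 (g : nat -> nat) :=
  Computable1_spec : computable 1 (fun u => g (nth 0 u 0)).
Class Computable2 (g : nat -> nat -> nat) :=
  Computable2_spec : computable 2 (fun u => g (nth 0 u 0) (nth 1 u 0)).
Class Computable3 (g : nat -> nat -> nat -> nat) :=
  Computable3_spec : computable 3 (fun u => g (nth 0 u 0) (nth 1 u 0) (nth 2 u 0)).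
Class Computable4 (g : nat -> nat -> nat -> nat -> nat) :=
  Computable4_spec : computable 4 (fun u => g (nth 0 u 0) (nth 1 u 0) (nth 2 u 0) (nth 3 u 0)).

Lemma computable_app1 g n a :
  Computable1 g -> computable n a -> computable n (fun v => g (a v)).
Proof.
  intros Hg Ha. exact (computable_comp n 1 _ [a] Hg ltac:(repeat constructor; auto) eq_refl).
Qed.

Lemma computable_app2 g n a b :
  Computable2 g -> computable n a -> computable n b -> computable n (fun v => g (a v) (b v)).
Proof.
  intros Hg Ha Hb.
  exact (computable_comp n 2 _ [a; b] Hg ltac:(repeat constructor; auto) eq_refl).
Qed.

Lemma computable_app3 g n a b c :
  Computable3 g -> computable n a -> computable n b -> computable n c ->
  computable n (fun v => g (a v) (b v) (c v)).
Proof.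
  intros Hg Ha Hb Hc.
  exact (computable_comp n 3 _ [a; b; c] Hg ltac:(repeat constructor; auto) eq_refl).
Qed.

Lemma computable_app4 g n a b c d :
  Computable4 g -> computable n a -> computable n b -> computable n c -> computable n d ->
  computable n (fun v => g (a v) (b v) (c v) (d v)).
Proof.
  intros Hg Ha Hb Hc Hd.
  exact (computable_comp n 4 _ [a; b; c; d] Hg ltac:(repeat constructor; auto) eq_refl).
Qed.

Lemma computable_select n m F idx :
  computable m F -> length idx = m -> Forall (fun i => i < n) idx ->
  computable n (fun u => F (map (fun i => nth i u 0) idx)).
Proof.
  intros HF Hl Hi. eapply computable_ext.
  - apply (computable_comp n m F (map (fun i u => nth i u 0) idx)); auto.
    + apply Forall_map. eapply Forall_impl; [|exact Hi]. intros. now apply computable_proj.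
    + now rewrite length_map.
  - intros. cbv beta. now rewrite map_map.
Qed.

Lemma map_nth_seq_skipn (u : list nat) k :
  map (fun i => nth i u 0) (seq k (length u - k)) = skipn k u.
Proof.
  revert k. induction u as [|x u IH]; intros [|k]; try reflexivity.
  - simpl. f_equal. rewrite <- seq_shift, map_map. specialize (IH 0). simpl in IH.
    now rewrite Nat.sub_0_r in IH.
  - simpl length. replace (S (length u) - S k) with (length u - k) by lia.
    rewrite <- seq_shift, map_map. apply IH.
Qed.

Lemma computable_drop_arg1 n F :
  computable (S n) F -> computable (S (S n)) (fun u => F (nth 0 u 0 :: tl (tl u))).
Proof.
  intros H. eapply computable_ext.
  - apply (computable_select (S (S n)) (S n) F (0 :: seq 2 n) H).
    + simpl. now rewrite length_seq.
    + constructor; [lia|]. apply Forall_forall. intros x Hx. apply in_seq in Hx. lia.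
  - intros u Hu. cbv beta. f_equal. simpl. f_equal. replace n with (length u - 2) by lia.
    rewrite map_nth_seq_skipn. now destruct u as [|x [|y u]].
Qed.

Fixpoint prim_rec (st : nat -> nat -> nat) (b : nat) (k : nat) : nat :=
  match k with 0 => b | S k' => st k' (prim_rec st b k') end.

Lemma computable_prim_rec n (B K : list nat -> nat) (st : nat -> nat -> list nat -> nat) :
  computable n B -> computable (S (S n)) (fun u => st (nth 0 u 0) (nth 1 u 0) (tl (tl u))) ->
  computable n K -> computable n (fun v => prim_rec (fun k a => st k a v) (B v) (K v)).
Proof.
  intros [pb Hb] [ps Hs] HK.
  assert (Hr : computable (S n)
           (fun u => prim_rec (fun k a => st k a (tl u)) (B (tl u)) (nth 0 u 0))).
  { exists (prec pb ps). intros [|k w] Hu; [discriminate|]. injection Hu as Hw. simpl.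
    induction k; simpl.
    - constructor. auto.
    - econstructor; [apply IHk|]. apply (Hs (k :: _ :: w)). simpl. lia. }
  eapply computable_ext.
  - apply (computable_comp n (S n) _ (K :: map (fun i v => nth i v 0) (seq 0 n)) Hr).
    + constructor; [exact HK|]. apply Forall_map, Forall_forall.
      intros i Hi. apply in_seq in Hi. apply computable_proj. lia.
    + simpl. now rewrite length_map, length_seq.
  - intros v Hv. simpl. rewrite map_map, <- Hv.
    replace (seq 0 (length v)) with (seq 0 (length v - 0)) by (f_equal; lia).
    now rewrite map_nth_seq_skipn.
Qed.

Lemma computable_nth_tl n i (F : list nat -> list nat) :
  computable n (fun u => nth (S i) (F u) 0) -> computable n (fun u => nth i (tl (F u)) 0).
Proof.
  intros H. eapply computable_ext; [exact H|]. intros u _. cbv beta. destruct (F u), i; reflexivity.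
Qed.

(* [rec] is run on the subgoals, so that [prove_computable] below can extend this tactic. *)
Ltac computable_core rec :=
  cbv beta zeta;
  first [ assumption | lazymatch goal with
  | |- computable _ (fun v => nth _ v 0) => apply computable_proj; lia
  | |- computable _ (fun v => nth _ (tl _) 0) => apply computable_nth_tl; rec
  | |- computable _ (fun _ => ?k) => apply computable_const
  | |- computable _ (fun v => S (@?a v)) => apply (computable_succ _ a); rec
  | |- computable _ (fun v => prim_rec (fun k a => @?st k a v) (@?B v) (@?K v)) =>
      apply (computable_prim_rec _ B K st); rec
  | |- computable _ (fun v => ?g (@?a v) (@?b v)) =>
      apply (computable_app2 g _ a b); [solve [typeclasses eauto] | rec ..]
  | |- computable _ (fun v => ?g (@?a v)) =>
      apply (computable_app1 g _ a); [solve [typeclasses eauto] | rec ..]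
  end ].

Ltac prove_computable_arith := computable_core ltac:(idtac; prove_computable_arith).

#[export] Instance Computable2_add : Computable2 Nat.add.
Proof.
  eapply computable_ext with (f := fun u => prim_rec (fun _ a => S a) (nth 0 u 0) (nth 1 u 0)).
  - prove_computable_arith.
  - intros v _. generalize (nth 1 v 0) (nth 0 v 0). induction n; simpl; intros; [lia|].
    rewrite IHn; lia.
Qed.

#[export] Instance Computable2_mul : Computable2 Nat.mul.
Proof.
  eapply computable_ext with (f := fun u => prim_rec (fun _ a => a + nth 0 u 0) 0 (nth 1 u 0)).
  - prove_computable_arith.
  - intros v _. generalize (nth 1 v 0) (nth 0 v 0). induction n; simpl; intros; [lia|].
    rewrite IHn; lia.
Qed.

#[export] Instance Computable1_pred : Computable1 Nat.pred.
Proof.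
  eapply computable_ext with (f := fun u => prim_rec (fun k _ => k) 0 (nth 0 u 0)).
  - prove_computable_arith.
  - intros v _. now destruct (nth 0 v 0).
Qed.

#[export] Instance Computable2_sub : Computable2 Nat.sub.
Proof.
  eapply computable_ext
    with (f := fun u => prim_rec (fun _ a => Nat.pred a) (nth 0 u 0) (nth 1 u 0)).
  - prove_computable_arith.
  - intros v _. generalize (nth 1 v 0) (nth 0 v 0). induction n; simpl; intros; [lia|].
    rewrite IHn; lia.
Qed.

Class BComputable1 (g : nat -> bool) :=
  BComputable1_spec : computable 1 (fun u => Nat.b2n (g (nth 0 u 0))).
Class BComputable2 (g : nat -> nat -> bool) :=
  BComputable2_spec : computable 2 (fun u => Nat.b2n (g (nth 0 u 0) (nth 1 u 0))).
Class BComputable3 (g : nat -> nat -> nat -> bool) :=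
  BComputable3_spec : computable 3 (fun u => Nat.b2n (g (nth 0 u 0) (nth 1 u 0) (nth 2 u 0))).

Lemma computable_bapp1 g n a :
  BComputable1 g -> computable n a -> computable n (fun v => Nat.b2n (g (a v))).
Proof. apply (computable_app1 (fun x => Nat.b2n (g x))). Qed.

Lemma computable_bapp2 g n a b :
  BComputable2 g -> computable n a -> computable n b ->
  computable n (fun v => Nat.b2n (g (a v) (b v))).
Proof. apply (computable_app2 (fun x y => Nat.b2n (g x y))). Qed.

Lemma computable_bapp3 g n a b c :
  BComputable3 g -> computable n a -> computable n b -> computable n c ->
  computable n (fun v => Nat.b2n (g (a v) (b v) (c v))).
Proof. apply (computable_app3 (fun x y z => Nat.b2n (g x y z))). Qed.

Lemma computable_if n (b : list nat -> bool) x y :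
  computable n (fun v => Nat.b2n (b v)) -> computable n x -> computable n y ->
  computable n (fun v => if b v then x v else y v).
Proof.
  intros. eapply computable_ext
    with (f := fun v => Nat.b2n (b v) * x v + (1 - Nat.b2n (b v)) * y v).
  - prove_computable_arith.
  - intros v _. destruct (b v); cbn [Nat.b2n]; lia.
Qed.

Lemma computable_andb n (a b : list nat -> bool) :
  computable n (fun v => Nat.b2n (a v)) -> computable n (fun v => Nat.b2n (b v)) ->
  computable n (fun v => Nat.b2n (a v && b v)).
Proof.
  intros. eapply computable_ext with (f := fun v => Nat.b2n (a v) * Nat.b2n (b v)).
  - prove_computable_arith.
  - intros v _. now destruct (a v), (b v).
Qed.

Lemma computable_orb n (a b : list nat -> bool) :
  computable n (fun v => Nat.b2n (a v)) -> computable n (fun v => Nat.b2n (b v)) ->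
  computable n (fun v => Nat.b2n (a v || b v)).
Proof.
  intros. eapply computable_ext with (f := fun v => 1 - (1 - (Nat.b2n (a v) + Nat.b2n (b v)))).
  - prove_computable_arith.
  - intros v _. now destruct (a v), (b v).
Qed.

Lemma computable_negb n (a : list nat -> bool) :
  computable n (fun v => Nat.b2n (a v)) -> computable n (fun v => Nat.b2n (negb (a v))).
Proof.
  intros. eapply computable_ext with (f := fun v => 1 - Nat.b2n (a v)).
  - prove_computable_arith.
  - intros v _. now destruct (a v).
Qed.

#[export] Instance BComputable2_eqb : BComputable2 Nat.eqb.
Proof.
  eapply computable_ext
    with (f := fun v => 1 - ((nth 0 v 0 - nth 1 v 0) + (nth 1 v 0 - nth 0 v 0))).
  - prove_computable_arith.
  - intros v _. cbv beta. destruct (Nat.eqb_spec (nth 0 v 0) (nth 1 v 0)); cbn [Nat.b2n]; lia.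
Qed.

#[export] Instance BComputable2_ltb : BComputable2 Nat.ltb.
Proof.
  eapply computable_ext with (f := fun v => 1 - (1 - (nth 1 v 0 - nth 0 v 0))).
  - prove_computable_arith.
  - intros v _. cbv beta. destruct (Nat.ltb_spec (nth 0 v 0) (nth 1 v 0)); cbn [Nat.b2n]; lia.
Qed.

#[export] Instance BComputable2_leb : BComputable2 Nat.leb.
Proof.
  eapply computable_ext with (f := fun v => 1 - (nth 0 v 0 - nth 1 v 0)).
  - prove_computable_arith.
  - intros v _. cbv beta. destruct (Nat.leb_spec (nth 0 v 0) (nth 1 v 0)); cbn [Nat.b2n]; lia.
Qed.

(** * Bounded quantifiers, counting and search *)

Fixpoint exists_below (n : nat) (P : nat -> bool) : bool :=
  match n with 0 => false | S k => exists_below k P || P k end.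
Fixpoint forall_below (n : nat) (P : nat -> bool) : bool :=
  match n with 0 => true | S k => forall_below k P && P k end.
Fixpoint count_below (n : nat) (P : nat -> bool) : nat :=
  match n with 0 => 0 | S k => count_below k P + Nat.b2n (P k) end.
(* The least [k < n] with [P k], or [n] if there is none. *)
Fixpoint least_below (n : nat) (P : nat -> bool) : nat :=
  match n with
  | 0 => 0
  | S k => if least_below k P <? k then least_below k P else if P k then k else S k
  end.

Section BoundedOperators.
Variables (n : nat) (B : list nat -> nat) (P : nat -> list nat -> bool).
Hypotheses (HB : computable n B)
  (HP : computable (S n) (fun u => Nat.b2n (P (nth 0 u 0) (tl u)))).

Let HP' : computable (S (S n)) (fun u => Nat.b2n (P (nth 0 u 0) (tl (tl u)))) :=
  computable_drop_arg1 n _ HP.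

Lemma computable_exists_below :
  computable n (fun v => Nat.b2n (exists_below (B v) (fun k => P k v))).
Proof.
  eapply computable_ext with
    (f := fun v => prim_rec (fun k a => if P k v then 1 else a) 0 (B v)).
  - apply (computable_prim_rec _ _ _ (fun k a v => if P k v then 1 else a));
      [prove_computable_arith | | auto].
    apply (computable_if _ (fun u => P (nth 0 u 0) (tl (tl u)))); auto; prove_computable_arith.
  - intros v _. induction (B v) as [|m IH]; simpl; auto. rewrite IH.
    now destruct (P m v), (exists_below m (fun k => P k v)).
Qed.

Lemma computable_forall_below :
  computable n (fun v => Nat.b2n (forall_below (B v) (fun k => P k v))).
Proof.
  eapply computable_ext with
    (f := fun v => prim_rec (fun k a => if P k v then a else 0) 1 (B v)).
  - apply (computable_prim_rec _ _ _ (fun k a v => if P k v then a else 0));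
      [prove_computable_arith | | auto].
    apply (computable_if _ (fun u => P (nth 0 u 0) (tl (tl u)))); auto; prove_computable_arith.
  - intros v _. induction (B v) as [|m IH]; simpl; auto. rewrite IH.
    now destruct (P m v), (forall_below m (fun k => P k v)).
Qed.

Lemma computable_count_below : computable n (fun v => count_below (B v) (fun k => P k v)).
Proof.
  eapply computable_ext with
    (f := fun v => prim_rec (fun k a => a + Nat.b2n (P k v)) 0 (B v)).
  - apply (computable_prim_rec _ _ _ (fun k a v => a + Nat.b2n (P k v)));
      [prove_computable_arith | | auto].
    apply (computable_app2 Nat.add _ (fun u => nth 1 u 0)); auto;
      [exact _ | prove_computable_arith].
  - intros v _. induction (B v) as [|m IH]; simpl; auto.
Qed.

Lemma computable_least_below : computable n (fun v => least_below (B v) (fun k => P k v)).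
Proof.
  eapply computable_ext with (f := fun v =>
    prim_rec (fun k a => if a <? k then a else if P k v then k else S k) 0 (B v)).
  - apply (computable_prim_rec _ _ _
      (fun k a v => if a <? k then a else if P k v then k else S k));
      [prove_computable_arith | | auto].
    apply (computable_if _ (fun u => nth 1 u 0 <? nth 0 u 0)).
    + apply (computable_bapp2 Nat.ltb); [exact _ | prove_computable_arith ..].
    + prove_computable_arith.
    + apply (computable_if _ (fun u => P (nth 0 u 0) (tl (tl u)))); auto; prove_computable_arith.
  - intros v _. induction (B v) as [|m IH]; simpl; auto. now rewrite IH.
Qed.

End BoundedOperators.

Ltac prove_computable :=
  cbv beta zeta;
  first [ lazymatch goal with
  | |- computable _ (fun v => if @?b v then @?x v else @?y v) =>
      apply (computable_if _ b x y); prove_computable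
  | |- computable _ (fun v => Nat.b2n (andb (@?a v) (@?b v))) =>
      apply (computable_andb _ a b); prove_computable
  | |- computable _ (fun v => Nat.b2n (orb (@?a v) (@?b v))) =>
      apply (computable_orb _ a b); prove_computable
  | |- computable _ (fun v => Nat.b2n (negb (@?a v))) =>
      apply (computable_negb _ a); prove_computable
  | |- computable _ (fun v => Nat.b2n (exists_below (@?B v) (fun k => @?P k v))) =>
      apply (computable_exists_below _ B P); prove_computable
  | |- computable _ (fun v => Nat.b2n (forall_below (@?B v) (fun k => @?P k v))) =>
      apply (computable_forall_below _ B P); prove_computable
  | |- computable _ (fun v => count_below (@?B v) (fun k => @?P k v)) =>
      apply (computable_count_below _ B P); prove_computable
  | |- computable _ (fun v => least_below (@?B v) (fun k => @?P k v)) =>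
      apply (computable_least_below _ B P); prove_computable
  | |- computable _ (fun v => Nat.b2n (?g (@?a v) (@?b v) (@?c v))) =>
      apply (computable_bapp3 g _ a b c); [solve [typeclasses eauto] | prove_computable ..]
  | |- computable _ (fun v => Nat.b2n (?g (@?a v) (@?b v))) =>
      apply (computable_bapp2 g _ a b); [solve [typeclasses eauto] | prove_computable ..]
  | |- computable _ (fun v => Nat.b2n (?g (@?a v))) =>
      apply (computable_bapp1 g _ a); [solve [typeclasses eauto] | prove_computable ..]
  | |- computable _ (fun v => ?g (@?a v) (@?b v) (@?c v) (@?d v)) =>
      apply (computable_app4 g _ a b c d); [solve [typeclasses eauto] | prove_computable ..]
  | |- computable _ (fun v => ?g (@?a v) (@?b v) (@?c v)) =>
      apply (computable_app3 g _ a b c); [solve [typeclasses eauto] | prove_computable ..]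
  end
  | computable_core ltac:(idtac; prove_computable) ].

Lemma exists_below_spec n P : exists_below n P = true <-> exists k, k < n /\ P k = true.
Proof.
  induction n; simpl.
  - split; [discriminate | intros [k [H _]]; lia].
  - rewrite orb_true_iff, IHn. split.
    + intros [[k [H1 H2]]|H]; eauto.
    + intros [k [H1 H2]]. destruct (Nat.eq_dec k n); subst; auto. left. exists k. split; auto. lia.
Qed.

Lemma exists_below_ext n P Q :
  (forall k, k < n -> P k = Q k) -> exists_below n P = exists_below n Q.
Proof. induction n; simpl; intros H; auto. rewrite IHn, H; auto. Qed.

Lemma forall_below_ext n P Q :
  (forall k, k < n -> P k = Q k) -> forall_below n P = forall_below n Q.
Proof. induction n; simpl; intros H; auto. rewrite IHn, H; auto. Qed.

Lemma count_below_ext n P Q :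
  (forall k, k < n -> P k = Q k) -> count_below n P = count_below n Q.
Proof. induction n; simpl; intros H; auto. rewrite IHn, H; auto. Qed.

Lemma exists_below_mono n m P : n <= m -> exists_below n P = true -> exists_below m P = true.
Proof.
  rewrite !exists_below_spec. intros Hnm [k [Hk HP]]. exists k. split; auto. lia.
Qed.

Lemma forall_below_succ n P : forall_below (S n) P = P 0 && forall_below n (fun k => P (S k)).
Proof.
  induction n; simpl in *.
  - now destruct (P 0).
  - rewrite IHn. now destruct (P 0).
Qed.

Lemma least_below_none n P : (forall k, k < n -> P k = false) -> least_below n P = n.
Proof.
  induction n; simpl; intros H; auto. rewrite IHn by auto. rewrite Nat.ltb_irrefl, H; auto.
Qed.

Lemma least_below_spec n P m :
  m < n -> P m = true -> (forall k, k < m -> P k = false) -> least_below n P = m.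
Proof.
  induction n; simpl; intros Hm HP Hk; [lia|].
  destruct (Nat.eq_dec m n).
  - subst. rewrite least_below_none by auto. now rewrite Nat.ltb_irrefl, HP.
  - rewrite IHn by (auto; lia). replace (m <? n) with true; auto.
    symmetry. apply Nat.ltb_lt. lia.
Qed.

Lemma count_below_mono n P Q :
  (forall k, k < n -> P k = true -> Q k = true) -> count_below n P <= count_below n Q.
Proof.
  induction n; simpl; intros H; auto.
  assert (count_below n P <= count_below n Q) by auto.
  destruct (P n) eqn:E; [rewrite H by auto|destruct (Q n)]; simpl; lia.
Qed.

Lemma count_below_lt n P Q :
  (forall k, k < n -> P k = true -> Q k = true) ->
  (exists k, k < n /\ P k = false /\ Q k = true) -> count_below n P < count_below n Q.
Proof.
  induction n; simpl; intros H [k [Hk [H1 H2]]]; [lia|].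
  destruct (Nat.eq_dec k n).
  - subst. rewrite H1, H2.
    assert (count_below n P <= count_below n Q) by (apply count_below_mono; auto).
    simpl. lia.
  - assert (count_below n P < count_below n Q)
      by (apply IHn; eauto; exists k; repeat split; auto; lia).
    destruct (P n) eqn:E; [rewrite H by auto|destruct (Q n)]; simpl; lia.
Qed.

Lemma count_below_true n : count_below n (fun _ => true) = n.
Proof. induction n; simpl; auto. rewrite IHn. simpl. lia. Qed.

Lemma count_below_lt_bound n P i : i < n -> P i = false -> count_below n P < n.
Proof.
  intros. rewrite <- (count_below_true n) at 2. apply count_below_lt; eauto.
Qed.

(** * Decoding pairs and sequences *)

#[export] Instance Computable1_triangle : Computable1 triangle.
Proof.
  eapply computable_ext with (f := fun u => prim_rec (fun k a => a + S k) 0 (nth 0 u 0)).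
  - prove_computable.
  - intros v _. cbv beta. induction (nth 0 v 0); simpl; auto.
Qed.

#[export] Instance Computable2_cpair : Computable2 cpair.
Proof.
  eapply computable_ext with (f := fun u => triangle (nth 0 u 0 + nth 1 u 0) + nth 1 u 0).
  - prove_computable.
  - intros v _. symmetry. apply cpair_triangle.
Qed.

(* Bounded search inverts [cpair], since [cpair x y] bounds both [x] and [y]. *)
Definition cpair_fst (n : nat) : nat :=
  least_below (S n) (fun x => exists_below (S n) (fun y => cpair x y =? n)).
Definition cpair_snd (n : nat) : nat :=
  least_below (S n) (fun y => exists_below (S n) (fun x => cpair x y =? n)).

#[export] Instance Computable1_cpair_fst : Computable1 cpair_fst.
Proof. unfold Computable1, cpair_fst. prove_computable. Qed.
#[export] Instance Computable1_cpair_snd : Computable1 cpair_snd.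
Proof. unfold Computable1, cpair_snd. prove_computable. Qed.

Lemma cpair_fst_cpair x y : cpair_fst (cpair x y) = x.
Proof.
  unfold cpair_fst. pose proof (cpair_ge x y). apply least_below_spec.
  - lia.
  - apply exists_below_spec. exists y. split; [lia | apply Nat.eqb_refl].
  - intros k Hk. apply not_true_is_false. intros H1. apply exists_below_spec in H1 as [y' [_ H1]].
    apply Nat.eqb_eq, cpair_inj in H1. lia.
Qed.

Lemma cpair_snd_cpair x y : cpair_snd (cpair x y) = y.
Proof.
  unfold cpair_snd. pose proof (cpair_ge x y). apply least_below_spec.
  - lia.
  - apply exists_below_spec. exists x. split; [lia | apply Nat.eqb_refl].
  - intros k Hk. apply not_true_is_false. intros H1. apply exists_below_spec in H1 as [x' [_ H1]].
    apply Nat.eqb_eq, cpair_inj in H1. lia.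
Qed.

Lemma cpair_fst_0 : cpair_fst 0 = 0.
Proof. exact (cpair_fst_cpair 0 0). Qed.
Lemma cpair_snd_0 : cpair_snd 0 = 0.
Proof. exact (cpair_snd_cpair 0 0). Qed.

Definition code_hd (c : nat) : nat := cpair_fst (Nat.pred c).
Definition code_tl (c : nat) : nat := cpair_snd (Nat.pred c).
Definition code_drop (k c : nat) : nat := prim_rec (fun _ a => code_tl a) c k.
Definition code_nth (k c : nat) : nat := code_hd (code_drop k c).
Definition code_length (c : nat) : nat := count_below c (fun k => negb (code_drop k c =? 0)).

#[export] Instance Computable1_code_hd : Computable1 code_hd.
Proof. unfold Computable1, code_hd. prove_computable. Qed.
#[export] Instance Computable1_code_tl : Computable1 code_tl.
Proof. unfold Computable1, code_tl. prove_computable. Qed.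
#[export] Instance Computable2_code_drop : Computable2 code_drop.
Proof. unfold Computable2, code_drop. prove_computable. Qed.
#[export] Instance Computable2_code_nth : Computable2 code_nth.
Proof. unfold Computable2, code_nth. prove_computable. Qed.
#[export] Instance Computable1_code_length : Computable1 code_length.
Proof. unfold Computable1, code_length. prove_computable. Qed.

Lemma code_hd_code_nats l : code_hd (code_nats l) = hd 0 l.
Proof. destruct l; [reflexivity | apply cpair_fst_cpair]. Qed.

Lemma code_tl_code_nats l : code_tl (code_nats l) = code_nats (tl l).
Proof. destruct l; [reflexivity | apply cpair_snd_cpair]. Qed.

Lemma code_drop_code_nats k l : code_drop k (code_nats l) = code_nats (skipn k l).
Proof.
  revert l. induction k; intros l; [reflexivity|].
  unfold code_drop in *. simpl. rewrite IHk, code_tl_code_nats. f_equal.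
  clear. revert l. induction k; destruct l; simpl; auto.
Qed.

Lemma code_nth_code_nats k l : code_nth k (code_nats l) = nth k l 0.
Proof.
  unfold code_nth. rewrite code_drop_code_nats, code_hd_code_nats.
  revert l. induction k; destruct l; simpl; auto.
Qed.

Lemma code_length_code_nats l : code_length (code_nats l) = length l.
Proof.
  unfold code_length.
  assert (H : forall n, n <= code_nats l ->
    count_below n (fun k => negb (code_drop k (code_nats l) =? 0)) = Nat.min n (length l)).
  { induction n; intros Hn; [reflexivity|]. cbn -[Nat.min code_drop].
    rewrite IHn, code_drop_code_nats by lia.
    destruct (le_lt_dec (length l) n).
    - rewrite skipn_all2 by auto. cbn -[Nat.min]. lia.
    - destruct (skipn n l) eqn:E.
      + apply (f_equal (@length nat)) in E. rewrite length_skipn in E. simpl in E. lia.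
      + cbn -[Nat.min]. lia. }
  rewrite H; pose proof (code_nats_ge l); lia.
Qed.

(** * A Kleene T-predicate for [W] *)

(* A certificate is a list of rule instances; each cites conclusions of entries further down
   the list as its (at most two) premises, the premise [0] meaning "none" (it codes a true
   judgment).  The judgment [judgment k a b y] reads, according to its kind [k]:
   0: program [a] on input [b] outputs [y];  1: program list [a] on [b] outputs list [y];
   2: entry [a] of list [b] is [y];  3: program [a] outputs a nonzero value on [m :: b] for
   every [m < y];  4: [a] codes a program;  5: [a] codes a list of programs.
   Kinds 4 and 5 are needed because [ev_rec0] does not run the step program of [prec]. *)
Definition judgment (k a b y : nat) : nat := cpair k (cpair a (cpair b y)).

Definition holds4 (k a b y : nat) : Prop :=
  match k with
  | 0 => exists p v, code p = a /\ code_nats v = b /\ eval p v y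
  | 1 => exists gs v ys, code_progs gs = a /\ code_nats v = b /\ code_nats ys = y /\ evals gs v ys
  | 2 => exists v, code_nats v = b /\ a < length v /\ nth a v 0 = y
  | 3 => exists p v, code p = a /\ code_nats v = b /\
          forall m, m < y -> exists k, eval p (m :: v) (S k)
  | 4 => exists p, code p = a
  | 5 => exists gs, code_progs gs = a
  | _ => True
  end.

Definition holds (j : nat) : Prop :=
  holds4 (cpair_fst j) (cpair_fst (cpair_snd j)) (cpair_fst (cpair_snd (cpair_snd j)))
    (cpair_snd (cpair_snd (cpair_snd j))).

Lemma holds_judgment k a b y : holds (judgment k a b y) <-> holds4 k a b y.
Proof. unfold holds, judgment. repeat rewrite ?cpair_fst_cpair, ?cpair_snd_cpair. reflexivity. Qed.

Lemma holds_0 : holds 0.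
Proof.
  change 0 with (judgment 0 0 0 0). apply holds_judgment. exists pzero, []. repeat split.
  constructor.
Qed.

Definition code_cons (x w : nat) : nat := S (cpair x w).

(* A rule instance is coded [cpair tag (cpair arg0 (cpair arg1 ...))]. *)
Definition rule_tag (e : nat) : nat := cpair_fst e.
Definition rule_arg (i e : nat) : nat :=
  cpair_fst (prim_rec (fun _ a => cpair_snd a) (cpair_snd e) i).

Definition conclusion (e : nat) : nat :=
  let d i := rule_arg i e in
  if rule_tag e =? 0 then judgment 0 (cpair 0 0) (d 0) 0 else
  if rule_tag e =? 1 then judgment 0 (cpair 1 0) (code_cons (d 0) (d 1)) (S (d 0)) else
  if rule_tag e =? 2 then judgment 0 (cpair 2 (d 0)) (d 1) (d 2) else
  if rule_tag e =? 3 then judgment 0 (cpair 3 (cpair (d 0) (d 1))) (d 2) (d 4) else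
  if rule_tag e =? 4 then judgment 0 (cpair 4 (cpair (d 0) (d 1))) (code_cons 0 (d 2)) (d 3) else
  if rule_tag e =? 5 then
    judgment 0 (cpair 4 (cpair (d 0) (d 1))) (code_cons (S (d 2)) (d 3)) (d 5) else
  if rule_tag e =? 6 then judgment 0 (cpair 5 (d 0)) (d 1) (d 2) else
  if rule_tag e =? 7 then judgment 1 0 (d 0) 0 else
  if rule_tag e =? 8 then judgment 1 (S (cpair (d 0) (d 1))) (d 2) (S (cpair (d 3) (d 4))) else
  if rule_tag e =? 9 then judgment 2 0 (code_cons (d 0) (d 1)) (d 0) else
  if rule_tag e =? 10 then judgment 2 (S (d 0)) (code_cons (d 1) (d 2)) (d 3) else
  if rule_tag e =? 11 then judgment 3 (d 0) (d 1) 0 else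
  if rule_tag e =? 12 then judgment 3 (d 0) (d 1) (S (d 2)) else
  if rule_tag e =? 13 then judgment 4 (cpair 0 0) 0 0 else
  if rule_tag e =? 14 then judgment 4 (cpair 1 0) 0 0 else
  if rule_tag e =? 15 then judgment 4 (cpair 2 (d 0)) 0 0 else
  if rule_tag e =? 16 then judgment 4 (cpair 3 (cpair (d 0) (d 1))) 0 0 else
  if rule_tag e =? 17 then judgment 4 (cpair 4 (cpair (d 0) (d 1))) 0 0 else
  if rule_tag e =? 18 then judgment 4 (cpair 5 (d 0)) 0 0 else
  if rule_tag e =? 19 then judgment 5 0 0 0 else
  if rule_tag e =? 20 then judgment 5 (S (cpair (d 0) (d 1))) 0 0 else 0.

Definition premise1 (e : nat) : nat :=
  let d i := rule_arg i e in
  if rule_tag e =? 2 then judgment 2 (d 0) (d 1) (d 2) else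
  if rule_tag e =? 3 then judgment 1 (d 1) (d 2) (d 3) else
  if rule_tag e =? 4 then judgment 0 (d 0) (d 2) (d 3) else
  if rule_tag e =? 5 then
    judgment 0 (cpair 4 (cpair (d 0) (d 1))) (code_cons (d 2) (d 3)) (d 4) else
  if rule_tag e =? 6 then judgment 0 (d 0) (code_cons (d 2) (d 1)) 0 else
  if rule_tag e =? 8 then judgment 0 (d 0) (d 2) (d 3) else
  if rule_tag e =? 10 then judgment 2 (d 0) (d 2) (d 3) else
  if rule_tag e =? 11 then judgment 4 (d 0) 0 0 else
  if rule_tag e =? 12 then judgment 3 (d 0) (d 1) (d 2) else
  if rule_tag e =? 16 then judgment 4 (d 0) 0 0 else
  if rule_tag e =? 17 then judgment 4 (d 0) 0 0 else
  if rule_tag e =? 18 then judgment 4 (d 0) 0 0 else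
  if rule_tag e =? 20 then judgment 4 (d 0) 0 0 else 0.

Definition premise2 (e : nat) : nat :=
  let d i := rule_arg i e in
  if rule_tag e =? 3 then judgment 0 (d 0) (d 3) (d 4) else
  if rule_tag e =? 4 then judgment 4 (d 1) 0 0 else
  if rule_tag e =? 5 then
    judgment 0 (d 1) (code_cons (d 2) (code_cons (d 4) (d 3))) (d 5) else
  if rule_tag e =? 6 then judgment 3 (d 0) (d 1) (d 2) else
  if rule_tag e =? 8 then judgment 1 (d 1) (d 2) (d 4) else
  if rule_tag e =? 12 then judgment 0 (d 0) (code_cons (d 2) (d 1)) (S (d 3)) else
  if rule_tag e =? 16 then judgment 5 (d 1) 0 0 else
  if rule_tag e =? 17 then judgment 4 (d 1) 0 0 else
  if rule_tag e =? 20 then judgment 5 (d 1) 0 0 else 0.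

#[export] Instance Computable4_judgment : Computable4 judgment.
Proof. unfold Computable4, judgment. prove_computable. Qed.
#[export] Instance Computable2_code_cons : Computable2 code_cons.
Proof. unfold Computable2, code_cons. prove_computable. Qed.
#[export] Instance Computable1_rule_tag : Computable1 rule_tag.
Proof. unfold Computable1, rule_tag. prove_computable. Qed.
#[export] Instance Computable2_rule_arg : Computable2 rule_arg.
Proof. unfold Computable2, rule_arg. prove_computable. Qed.
#[export] Instance Computable1_conclusion : Computable1 conclusion.
Proof. unfold Computable1, conclusion. prove_computable. Qed.
#[export] Instance Computable1_premise1 : Computable1 premise1.
Proof. unfold Computable1, premise1. prove_computable. Qed.
#[export] Instance Computable1_premise2 : Computable1 premise2.
Proof. unfold Computable1, premise2. prove_computable. Qed.

Definition premise_met_b (j r : nat) : bool :=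
  (j =? 0) || exists_below (code_length r) (fun m => conclusion (code_nth m r) =? j).
Definition rule_ok_b (e r : nat) : bool :=
  (rule_tag e <=? 20) && premise_met_b (premise1 e) r && premise_met_b (premise2 e) r.
Definition valid_cert_b (c : nat) : bool :=
  forall_below (code_length c) (fun k => rule_ok_b (code_nth k c) (code_drop (S k) c)).
Definition halting_judgment_b (j e x : nat) : bool :=
  (cpair_fst j =? 0) && (cpair_fst (cpair_snd j) =? e) &&
  (cpair_fst (cpair_snd (cpair_snd j)) =? code_cons x 0).
Definition kleene_T (e x s : nat) : bool :=
  exists_below (S s) (fun c => valid_cert_b c &&
    exists_below (code_length c) (fun k => halting_judgment_b (conclusion (code_nth k c)) e x)).

#[export] Instance BComputable2_premise_met_b : BComputable2 premise_met_b.
Proof. unfold BComputable2, premise_met_b. prove_computable. Qed.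
#[export] Instance BComputable2_rule_ok_b : BComputable2 rule_ok_b.
Proof. unfold BComputable2, rule_ok_b. prove_computable. Qed.
#[export] Instance BComputable1_valid_cert_b : BComputable1 valid_cert_b.
Proof. unfold BComputable1, valid_cert_b. prove_computable. Qed.
#[export] Instance BComputable3_halting_judgment_b : BComputable3 halting_judgment_b.
Proof. unfold BComputable3, halting_judgment_b. prove_computable. Qed.
#[export] Instance BComputable3_kleene_T : BComputable3 kleene_T.
Proof. unfold BComputable3, kleene_T. prove_computable. Qed.

Definition premise_met (j : nat) (R : list nat) : Prop := j = 0 \/ In j (map conclusion R).
Definition rule_ok (e : nat) (R : list nat) : Prop :=
  rule_tag e <= 20 /\ premise_met (premise1 e) R /\ premise_met (premise2 e) R.
Fixpoint valid_cert (L : list nat) : Prop :=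
  match L with [] => True | e :: R => rule_ok e R /\ valid_cert R end.

Lemma in_map_nth_iff (f : nat -> nat) R x :
  In x (map f R) <-> exists m, m < length R /\ f (nth m R 0) = x.
Proof.
  rewrite in_map_iff. split.
  - intros [y [H1 H2]]. apply In_nth with (d := 0) in H2 as [m [Hm H2]]. exists m. now subst.
  - intros [m [Hm H]]. exists (nth m R 0). split; auto. now apply nth_In.
Qed.

Lemma premise_met_b_spec j R : premise_met_b j (code_nats R) = true <-> premise_met j R.
Proof.
  unfold premise_met_b, premise_met. rewrite orb_true_iff, Nat.eqb_eq, code_length_code_nats.
  rewrite (exists_below_ext _ _ (fun m => conclusion (nth m R 0) =? j))
    by (intros; now rewrite code_nth_code_nats).
  rewrite exists_below_spec, in_map_nth_iff.
  split; intros [H|[m [Hm H]]]; auto; right; exists m; split; auto; now apply Nat.eqb_eq.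
Qed.

Lemma rule_ok_b_spec e R : rule_ok_b e (code_nats R) = true <-> rule_ok e R.
Proof.
  unfold rule_ok_b, rule_ok. rewrite !andb_true_iff, !premise_met_b_spec, Nat.leb_le. tauto.
Qed.

Lemma valid_cert_b_spec L : valid_cert_b (code_nats L) = true <-> valid_cert L.
Proof.
  unfold valid_cert_b. rewrite code_length_code_nats.
  rewrite (forall_below_ext _ _ (fun k => rule_ok_b (nth k L 0) (code_nats (skipn (S k) L))))
    by (intros; now rewrite code_nth_code_nats, code_drop_code_nats).
  induction L as [|e R IH]; [simpl; tauto|].
  cbn [length]. rewrite forall_below_succ, andb_true_iff. cbn [nth skipn valid_cert].
  now rewrite rule_ok_b_spec, IH.
Qed.

Lemma premise_met_app_l j R R' : premise_met j R -> premise_met j (R ++ R').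
Proof.
  intros [H|H]; [now left | right]. rewrite map_app. now apply in_or_app; left.
Qed.

Lemma valid_cert_app L1 L2 : valid_cert L1 -> valid_cert L2 -> valid_cert (L1 ++ L2).
Proof.
  induction L1; simpl; auto. intros [[H1 [H2 H3]] H4] H5.
  repeat split; auto using premise_met_app_l.
Qed.

Lemma code_nats_cons_inv v x b :
  code_nats v = code_cons x b -> exists w, v = x :: w /\ code_nats w = b.
Proof.
  destruct v as [|y w]; simpl; intros H; [discriminate|]. injection H as H.
  apply cpair_inj in H as [H1 H2]. subst. eauto.
Qed.

Lemma code_prec_inv p a b :
  code p = cpair 4 (cpair a b) -> exists f g, p = prec f g /\ code f = a /\ code g = b.
Proof.
  destruct p as [| | | f gs | f g | f]; rewrite ?code_pcomp; simpl; intros H;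
    apply cpair_inj in H as [H1 H2]; try discriminate.
  apply cpair_inj in H2 as [H2 H3]. eauto.
Qed.

Ltac decode_codes := repeat (subst; match goal with
  | H : code ?p = code ?q |- _ => apply code_inj in H
  | H : code_progs ?p = code_progs ?q |- _ => apply code_progs_inj in H
  | H : code_nats ?a = code_nats ?b |- _ => apply code_nats_inj in H
  | H : code_nats ?v = code_cons _ _ |- _ =>
      let w := fresh "w" in apply code_nats_cons_inv in H as [w [? ?]]
  | H : code ?p = cpair 4 (cpair _ _) |- _ =>
      let f := fresh "f" in let g := fresh "g" in apply code_prec_inv in H as [f [g [? [? ?]]]]
  end); subst.

Lemma rule_sound e R :
  rule_ok e R -> (forall j, In j (map conclusion R) -> holds j) -> holds (conclusion e).
Proof.
  intros [Ht [H1 H2]] HR.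
  assert (S1 : holds (premise1 e)) by (destruct H1 as [->|]; [apply holds_0 | auto]).
  assert (S2 : holds (premise2 e)) by (destruct H2 as [->|]; [apply holds_0 | auto]).
  clear H1 H2 HR. unfold conclusion, premise1, premise2 in *. cbv zeta in *.
  set (d0 := rule_arg 0 e) in *. set (d1 := rule_arg 1 e) in *. set (d2 := rule_arg 2 e) in *.
  set (d3 := rule_arg 3 e) in *. set (d4 := rule_arg 4 e) in *. set (d5 := rule_arg 5 e) in *.
  clearbody d0 d1 d2 d3 d4 d5. remember (rule_tag e) as t. clear Heqt e.
  destruct t as [|[|[|[|[|[|[|[|[|[|[|[|[|[|[|[|[|[|[|[|[|t]]]]]]]]]]]]]]]]]]]]]; [..|lia];
    simpl in *; rewrite ?holds_judgment in *; simpl in *.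
  - destruct (code_nats_surj d0) as [v Hv]. exists pzero, v. repeat split; auto. constructor.
  - destruct (code_nats_surj d1) as [w Hw]. exists psucc, (d0 :: w). simpl. rewrite Hw.
    repeat split; auto. constructor.
  - destruct S1 as [v [Hv [Hl Hn]]]. exists (pproj d0), v. subst. repeat split; auto.
    now constructor.
  - destruct S1 as [gs [v [ys [Hg [Hv [Hy Hev]]]]]]. destruct S2 as [p [ys' [Hp [Hy' Hev']]]].
    decode_codes. exists (pcomp p gs), v. rewrite code_pcomp. repeat split; auto.
    econstructor; eauto.
  - destruct S1 as [p [w [Hp [Hw Hev]]]]. destruct S2 as [g Hg].
    exists (prec p g), (0 :: w). simpl. subst. repeat split; auto. now constructor.
  - destruct S1 as [p1 [v1 [Hp1 [Hv1 Hev1]]]]. destruct S2 as [p2 [v2 [Hp2 [Hv2 Hev2]]]].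
    decode_codes. eexists (prec _ _), (S d2 :: _). simpl. repeat split; eauto.
    econstructor; eauto.
  - destruct S1 as [p1 [v1 [Hp1 [Hv1 Hev1]]]]. destruct S2 as [p2 [v2 [Hp2 [Hv2 Hev2]]]].
    decode_codes. eexists (pmu _), _. repeat split; eauto. constructor; eauto.
  - destruct (code_nats_surj d0) as [v Hv]. exists [], v, []. repeat split; auto. constructor.
  - destruct S1 as [p [v [Hp [Hv Hev]]]]. destruct S2 as [gs [v' [ys [Hg [Hv' [Hy Hev']]]]]].
    decode_codes. exists (p :: gs), v, (d3 :: ys). simpl. repeat split; auto.
    now constructor.
  - destruct (code_nats_surj d1) as [w Hw]. exists (d0 :: w). simpl. rewrite Hw.
    repeat split; auto. lia.
  - destruct S1 as [w [Hw [Hl Hn]]]. exists (d1 :: w). simpl. rewrite Hw.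
    repeat split; auto. lia.
  - destruct S1 as [p Hp]. destruct (code_nats_surj d1) as [v Hv]. exists p, v.
    repeat split; auto. intros; lia.
  - destruct S1 as [p [v [Hp [Hv Hm]]]]. destruct S2 as [p' [v' [Hp' [Hv' Hev]]]].
    decode_codes. eexists _, _. repeat split; eauto. intros m Hm'.
    destruct (Nat.eq_dec m d2); [subst; eauto | apply Hm; lia].
  - now exists pzero.
  - now exists psucc.
  - now exists (pproj d0).
  - destruct S1 as [p Hp]. destruct S2 as [gs Hg]. exists (pcomp p gs).
    rewrite code_pcomp. now subst.
  - destruct S1 as [p Hp]. destruct S2 as [g Hg]. exists (prec p g). now subst.
  - destruct S1 as [p Hp]. exists (pmu p). now subst.
  - now exists [].
  - destruct S1 as [p Hp]. destruct S2 as [gs Hg]. exists (p :: gs). now subst.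
Qed.

Lemma valid_cert_sound L : valid_cert L -> forall j, In j (map conclusion L) -> holds j.
Proof.
  induction L as [|e R IH]; simpl; intros HV j Hj; [contradiction|].
  destruct HV as [Ho HV]. destruct Hj as [<-|Hj]; auto. apply (rule_sound e R); auto.
Qed.

Definition derivable (J : nat) : Prop := exists L, valid_cert L /\ In J (map conclusion L).

Definition mk_rule (t : nat) (ds : list nat) : nat := cpair t (fold_right cpair 0 ds).

Lemma rule_tag_mk_rule t ds : rule_tag (mk_rule t ds) = t.
Proof. apply cpair_fst_cpair. Qed.

Lemma rule_arg_mk_rule i t ds : rule_arg i (mk_rule t ds) = nth i ds 0.
Proof.
  unfold rule_arg, mk_rule. rewrite cpair_snd_cpair.
  assert (prim_rec (fun _ a => cpair_snd a) (fold_right cpair 0 ds) i =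
          fold_right cpair 0 (skipn i ds)) as ->.
  { induction i; simpl; auto. rewrite IHi. clear IHi. revert ds.
    induction i; destruct ds; simpl; auto using cpair_snd_0, cpair_snd_cpair. }
  revert ds. induction i; destruct ds; simpl; auto using cpair_fst_0, cpair_fst_cpair.
Qed.

Lemma derivable_by_rule e Ls J :
  Forall valid_cert Ls -> rule_ok e (concat Ls) -> conclusion e = J -> derivable J.
Proof.
  intros HF Ho <-. exists (e :: concat Ls). split; [split; auto | now left].
  clear Ho. induction HF; cbn [concat valid_cert]; auto using valid_cert_app.
Qed.

Lemma in_conclusions_concat J L Ls :
  In J (map conclusion L) -> In L Ls -> In J (map conclusion (concat Ls)).
Proof.
  intros H1 H2. rewrite concat_map. apply in_concat. exists (map conclusion L).
  split; auto. now apply in_map.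
Qed.

Ltac simplify_rule t ds :=
  cbv zeta; rewrite (rule_tag_mk_rule t ds); cbn [Nat.eqb];
  rewrite ?(rule_arg_mk_rule _ t ds); cbn [nth].

Ltac apply_rule t ds Ls :=
  apply (derivable_by_rule (mk_rule t ds) Ls);
  [ repeat constructor; assumption
  | unfold rule_ok, premise_met, premise1, premise2; simplify_rule t ds;
    repeat split; try lia;
    lazymatch goal with
    | |- 0 = 0 \/ _ => left; reflexivity
    | _ => right; eapply in_conclusions_concat; [eassumption | simpl; tauto]
    end
  | unfold conclusion; simplify_rule t ds; try reflexivity ].

Lemma derivable_prog p : derivable (judgment 4 (code p) 0 0).
Proof.
  revert p. fix IH 1. intros [| | i | f gs | f g | f].
  - apply_rule 13 (@nil nat) (@nil (list nat)).
  - apply_rule 14 (@nil nat) (@nil (list nat)).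
  - apply_rule 15 [i] (@nil (list nat)).
  - destruct (IH f) as [L1 [V1 I1]].
    assert (derivable (judgment 5 (code_progs gs) 0 0)) as [L2 [V2 I2]].
    { induction gs as [|g gs [L4 [V4 I4]]].
      - apply_rule 19 (@nil nat) (@nil (list nat)).
      - destruct (IH g) as [L3 [V3 I3]]. apply_rule 20 [code g; code_progs gs] [L3; L4]. }
    rewrite code_pcomp. apply_rule 16 [code f; code_progs gs] [L1; L2].
  - destruct (IH f) as [L1 [V1 I1]]. destruct (IH g) as [L2 [V2 I2]].
    apply_rule 17 [code f; code g] [L1; L2].
  - destruct (IH f) as [L1 [V1 I1]]. apply_rule 18 [code f] [L1].
Qed.

Lemma derivable_nth v i : i < length v -> derivable (judgment 2 i (code_nats v) (nth i v 0)).
Proof.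
  revert i. induction v as [|x v IH]; simpl; intros i Hi; [lia|]. destruct i.
  - apply_rule 9 [x; code_nats v] (@nil (list nat)).
  - destruct (IH i) as [L1 [V1 I1]]; [lia|].
    apply_rule 10 [i; x; code_nats v; nth i v 0] [L1].
Qed.

Lemma derivable_mu_guard p v n :
  (forall m, m < n -> exists k, derivable (judgment 0 (code p) (code_nats (m :: v)) (S k))) ->
  derivable (judgment 3 (code p) (code_nats v) n).
Proof.
  induction n; intros H.
  - destruct (derivable_prog p) as [L1 [V1 I1]]. apply_rule 11 [code p; code_nats v] [L1].
  - destruct IHn as [L1 [V1 I1]]; [intros; apply H; lia|].
    destruct (H n) as [k [L2 [V2 I2]]]; [lia|].
    apply_rule 12 [code p; code_nats v; n; k] [L1; L2].
Qed.

Lemma derivable_eval p v y : eval p v y -> derivable (judgment 0 (code p) (code_nats v) y)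
with derivable_evals gs v ys :
  evals gs v ys -> derivable (judgment 1 (code_progs gs) (code_nats v) (code_nats ys)).
Proof.
  - destruct 1.
    + apply_rule 0 [code_nats v] (@nil (list nat)).
    + apply_rule 1 [x; code_nats v] (@nil (list nat)).
    + destruct (derivable_nth v i H) as [L1 [V1 I1]].
      apply_rule 2 [i; code_nats v; nth i v 0] [L1].
    + destruct (derivable_evals _ _ _ H) as [L1 [V1 I1]].
      destruct (derivable_eval _ _ _ H0) as [L2 [V2 I2]].
      rewrite code_pcomp.
      apply_rule 3 [code f; code_progs gs; code_nats v; code_nats ys; y] [L1; L2].
    + destruct (derivable_eval _ _ _ H) as [L1 [V1 I1]].
      destruct (derivable_prog g) as [L2 [V2 I2]].
      apply_rule 4 [code f; code g; code_nats v; y] [L1; L2].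
    + destruct (derivable_eval _ _ _ H) as [L1 [V1 I1]].
      destruct (derivable_eval _ _ _ H0) as [L2 [V2 I2]].
      apply_rule 5 [code f; code g; n; code_nats v; y; z] [L1; L2].
    + destruct (derivable_eval _ _ _ H) as [L1 [V1 I1]].
      destruct (derivable_mu_guard f v n) as [L2 [V2 I2]].
      { intros m Hm. destruct (H0 m Hm) as [k Hk]. eauto. }
      apply_rule 6 [code f; code_nats v; n] [L1; L2].
  - destruct 1.
    + apply_rule 7 [code_nats v] (@nil (list nat)).
    + destruct (derivable_eval _ _ _ H) as [L1 [V1 I1]].
      destruct (derivable_evals _ _ _ H0) as [L2 [V2 I2]].
      apply_rule 8 [code g; code_progs gs; code_nats v; y; code_nats ys] [L1; L2].
Qed.

Lemma W_iff_kleene_T e x : W e x <-> exists s, kleene_T e x s = true.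
Proof.
  split.
  - intros [p [<- [y Hy]]]. destruct (derivable_eval _ _ _ Hy) as [L [V I]].
    exists (code_nats L). apply exists_below_spec. exists (code_nats L). split; [lia|].
    apply andb_true_iff. split; [now apply valid_cert_b_spec|].
    apply exists_below_spec. rewrite code_length_code_nats.
    apply in_map_nth_iff in I as [m [Hm I]]. exists m. split; auto.
    rewrite code_nth_code_nats, I. unfold halting_judgment_b, judgment.
    repeat rewrite ?cpair_fst_cpair, ?cpair_snd_cpair. now rewrite !Nat.eqb_refl.
  - intros [s Hs]. apply exists_below_spec in Hs as [c [_ Hc]].
    apply andb_true_iff in Hc as [Hv Hk]. destruct (code_nats_surj c) as [L <-].
    apply valid_cert_b_spec in Hv. rewrite code_length_code_nats in Hk.
    apply exists_below_spec in Hk as [m [Hm Hk]]. rewrite code_nth_code_nats in Hk.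
    assert (HS : holds (conclusion (nth m L 0))).
    { apply (valid_cert_sound L Hv). apply in_map_nth_iff. eauto. }
    unfold halting_judgment_b in Hk. rewrite !andb_true_iff, !Nat.eqb_eq in Hk.
    destruct Hk as [[H1 H2] H3]. unfold holds in HS. rewrite H1, H2, H3 in HS.
    destruct HS as [p [v [Hp [Hv' Hev]]]]. apply code_nats_cons_inv in Hv' as [w [-> Hw]].
    change 0 with (code_nats []) in Hw. apply code_nats_inj in Hw. subst. exists p. eauto.
Qed.

Lemma kleene_T_mono e x s s' : s <= s' -> kleene_T e x s = true -> kleene_T e x s' = true.
Proof. intros. apply (exists_below_mono (S s)); auto. lia. Qed.

(** * Ranges of computable functions are uniformly c.e. *)

Lemma computable_search_zero n F :
  computable (S n) F ->
  exists p, forall w, length w = n -> ((exists y, eval p w y) <-> exists k, F (k :: w) = 0).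
Proof.
  intros [q Hq]. exists (pmu q). intros w Hw. split.
  - intros [y Hy]. inversion Hy; subst. exists y.
    eapply eval_det; [apply Hq; simpl; lia | eassumption].
  - intros Hk. destruct (exists_least _ Hk) as [m [Hm Hlt]]. exists m. constructor.
    + rewrite <- Hm. apply Hq. simpl; lia.
    + intros j Hj. specialize (Hlt j Hj). destruct (F (j :: w)) as [|k] eqn:E; [contradiction|].
      exists k. rewrite <- E. apply Hq. simpl; lia.
Qed.

Definition code_const_prog (k : nat) : nat :=
  prim_rec (fun _ a => cpair 3 (cpair (cpair 1 0) (S (cpair a 0)))) (cpair 0 0) k.

Lemma code_const_prog_spec k : code_const_prog k = code (const_prog k).
Proof. induction k; auto. unfold code_const_prog in *. simpl. now rewrite IHk. Qed.

(* The code of the unary program [x |-> P (b, i, x)] when [a] is the code of [P]. *)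
Definition spec_code (a b i : nat) : nat :=
  cpair 3 (cpair a (S (cpair (code_const_prog b)
    (S (cpair (code_const_prog i) (S (cpair (cpair 2 0) 0))))))).

#[export] Instance Computable1_code_const_prog : Computable1 code_const_prog.
Proof. unfold Computable1, code_const_prog. prove_computable. Qed.
#[export] Instance Computable3_spec_code : Computable3 spec_code.
Proof. unfold Computable3, spec_code. prove_computable. Qed.

Lemma W_spec_code P b i x : W (spec_code (code P) b i) x <-> exists y, eval P [b; i; x] y.
Proof.
  set (Q := pcomp P [const_prog b; const_prog i; pproj 0]).
  assert (HQ : spec_code (code P) b i = code Q).
  { unfold Q. rewrite code_pcomp. unfold spec_code. now rewrite !code_const_prog_spec. }
  assert (Hargs : evals [const_prog b; const_prog i; pproj 0] [x] [b; i; x]).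
  { repeat constructor; apply eval_const_prog. }
  rewrite HQ. split.
  - intros [p [Hp [y Hy]]]. apply code_inj in Hp. subst p. inversion Hy; subst.
    pose proof (evals_det _ _ _ Hargs _ H1). subst. eauto.
  - intros [y Hy]. exists Q. split; auto. exists y. econstructor; eauto.
Qed.

Lemma enumerable_range F :
  Computable3 F -> exists a, forall b i x, W (spec_code a b i) x <-> exists s, x = F b i s.
Proof.
  intros HF.
  assert (HC : computable 4
    (fun u => Nat.b2n (negb (nth 3 u 0 =? F (nth 1 u 0) (nth 2 u 0) (nth 0 u 0)))))
    by prove_computable.
  destruct (computable_search_zero 3 _ HC) as [R HR]. exists (code R). intros b i x.
  rewrite W_spec_code, (HR [b; i; x]) by reflexivity. cbn [nth].
  split; intros [s Hs]; exists s; revert Hs.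
  - now destruct (Nat.eqb_spec x (F b i s)).
  - intros ->. now rewrite Nat.eqb_refl.
Qed.

(** * Approximating minima and maxima *)

Lemma maxW_unique e v1 v2 : maxW e v1 -> maxW e v2 -> v1 = v2.
Proof.
  destruct v1 as [|m1|], v2 as [|m2|]; simpl; intros H1 H2; auto.
  - destruct H2 as [H2 _]. now destruct (H1 _ H2).
  - destruct (H2 0) as [k [_ Hk]]. now destruct (H1 _ Hk).
  - destruct H1 as [H1 _]. now destruct (H2 _ H1).
  - destruct H1 as [H1 H1'], H2 as [H2 H2']. specialize (H1' _ H2). specialize (H2' _ H1).
    f_equal. lia.
  - destruct H1 as [_ H1]. destruct (H2 (S m1)) as [k [Hk Hk']]. specialize (H1 _ Hk'). lia.
  - destruct (H1 0) as [k [_ Hk]]. now destruct (H2 _ Hk).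
  - destruct H2 as [_ H2]. destruct (H1 (S m2)) as [k [Hk Hk']]. specialize (H2 _ Hk'). lia.
Qed.

Lemma E_max_Fin e1 e2 m1 m2 :
  maxW e1 (Fin m1) -> maxW e2 (Fin m2) -> (E_max e1 e2 <-> m1 = m2).
Proof.
  intros H1 H2. split.
  - intros [v [Hv1 Hv2]]. pose proof (maxW_unique _ _ _ H1 Hv1).
    pose proof (maxW_unique _ _ _ H2 Hv2). congruence.
  - intros ->. now exists (Fin m2).
Qed.

Lemma maxW_range e (F : nat -> nat) m L :
  (forall x, W e x <-> exists s, x = F s) ->
  (forall s, L <= s -> F s = m) -> (forall s, s < L -> F s <= m) -> maxW e (Fin m).
Proof.
  intros HW Hlate Hearly. split.
  - apply HW. exists L. now rewrite Hlate.
  - intros x Hx. apply HW in Hx as [s ->]. destruct (le_lt_dec L s).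
    + now rewrite Hlate.
    + auto.
Qed.

(* The least [x <= s] certified to lie in [W e] by stage [s], coded as [S x]; [0] if none. *)
Definition min_approx (e s : nat) : nat :=
  if least_below (S s) (fun x => kleene_T e x s) <=? s
  then S (least_below (S s) (fun x => kleene_T e x s)) else 0.

#[export] Instance Computable2_min_approx : Computable2 min_approx.
Proof. unfold Computable2, min_approx. prove_computable. Qed.

Definition decode_min (a : nat) : ext := match a with 0 => PInf | S m => Fin m end.

Lemma E_min_decode e1 e2 a1 a2 :
  (forall v, minW e1 v <-> v = decode_min a1) -> (forall v, minW e2 v <-> v = decode_min a2) ->
  (E_min e1 e2 <-> a1 = a2).
Proof.
  intros H1 H2. split.
  - intros [v [Hv1 Hv2]]. apply H1 in Hv1. apply H2 in Hv2. subst.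
    destruct a1, a2; simpl in Hv2; congruence.
  - intros ->. exists (decode_min a2). now rewrite H1, H2.
Qed.

Lemma min_approx_settles e : exists a s0,
  (forall t, s0 <= t -> min_approx e t = a) /\ (forall v, minW e v <-> v = decode_min a).
Proof.
  destruct (classic (exists k, W e k)) as [Hex|Hn].
  - destruct (exists_least _ Hex) as [m [Hm Hlt]].
    destruct (proj1 (W_iff_kleene_T e m) Hm) as [s1 Hs1].
    exists (S m), (Nat.max s1 m). split.
    + intros t Ht. unfold min_approx.
      rewrite (least_below_spec (S t) _ m); [| lia | apply (kleene_T_mono _ _ s1); auto; lia |].
      * replace (m <=? t) with true; auto. symmetry. apply Nat.leb_le. lia.
      * intros k Hk. apply not_true_is_false. intros HT.
        apply (Hlt k Hk). apply W_iff_kleene_T. eauto.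
    + intros [| m' |]; simpl; split; intros H; try discriminate; try contradiction.
      * destruct H as [H1 H2]. specialize (H2 m Hm). f_equal.
        destruct (lt_eq_lt_dec m' m) as [[Hl|He]|Hl]; auto; [exfalso; apply (Hlt m' Hl H1)|lia].
      * injection H as ->. split; auto. intros k Hk.
        destruct (le_lt_dec m k); auto. exfalso. apply (Hlt k); auto.
      * exfalso. apply (H m Hm).
  - exists 0, 0. split.
    + intros t _. unfold min_approx. rewrite least_below_none.
      * replace (S t <=? t) with false; auto. symmetry. apply Nat.leb_gt. lia.
      * intros k _. apply not_true_is_false. intros HT. apply Hn. exists k.
        apply W_iff_kleene_T. eauto.
    + intros [| m' |]; simpl; split; intros H; try discriminate; try contradiction; auto.
      * destruct H as [H1 _]. exfalso. apply Hn; eauto.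
      * intros k Hk. apply Hn; eauto.
Qed.

(* [last_change ch s] is [t + 1] for the last [t < s] with [ch t], or [0]. *)
Definition last_change (ch : nat -> bool) (s : nat) : nat :=
  prim_rec (fun t a => if ch t then S t else a) 0 s.

Lemma last_change_le ch s : last_change ch s <= s.
Proof. induction s; unfold last_change in *; simpl; auto. destruct (ch s); lia. Qed.

Lemma last_change_mono ch s t : s <= t -> last_change ch s <= last_change ch t.
Proof.
  induction 1; auto. unfold last_change in *; simpl. destruct (ch m); auto.
  pose proof (last_change_le ch m). unfold last_change in *. lia.
Qed.

Lemma last_change_idem ch s : last_change ch (last_change ch s) = last_change ch s.
Proof.
  induction s; auto. unfold last_change in *; simpl. destruct (ch s) eqn:E; auto.
  simpl. now rewrite E.
Qed.

Lemma last_change_settles ch s0 : (forall t, s0 <= t -> ch t = false) ->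
  exists L, (forall t, L <= t -> last_change ch t = L) /\
            (forall t, t < L -> last_change ch t < L) /\
            (forall t, L <= t -> ch t = false).
Proof.
  intros H. exists (last_change ch s0).
  assert (Hlate : forall t, last_change ch s0 <= t -> last_change ch t = last_change ch s0).
  { intros t Ht. destruct (le_lt_dec s0 t) as [Hs|Hs].
    - clear Ht. induction Hs; auto. unfold last_change at 1; simpl. now rewrite H by lia.
    - apply Nat.le_antisymm; [apply last_change_mono; lia|].
      rewrite <- (last_change_idem ch s0) at 1. now apply last_change_mono. }
  split; [|split]; auto.
  - intros t Ht. pose proof (last_change_le ch t). lia.
  - intros t Ht. destruct (ch t) eqn:E; auto. specialize (Hlate (S t) ltac:(lia)).
    unfold last_change at 1 in Hlate. simpl in Hlate. rewrite E in Hlate. lia.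
Qed.

Lemma constant_after (ch : nat -> bool) (h : nat -> nat) L :
  (forall t, L <= t -> ch t = false) -> (forall t, ch t = false -> h (S t) = h t) ->
  forall t, L <= t -> h t = h L.
Proof. intros H1 H2 t Ht. induction Ht; auto. rewrite H2; auto. Qed.

Definition approx_changed (es : nat -> nat) (n t : nat) : bool :=
  exists_below n (fun j => negb (min_approx (es j) (S t) =? min_approx (es j) t)).

Lemma approx_family_settles (es : nat -> nat) n : exists (A : nat -> nat) L,
  (forall j, j < n -> forall t, L <= t -> min_approx (es j) t = A j) /\
  (forall t, L <= t -> last_change (approx_changed es n) t = L) /\
  (forall t, t < L -> last_change (approx_changed es n) t < L) /\
  (forall j, j < n -> forall w, minW (es j) w <-> w = decode_min (A j)).
Proof.
  assert (Hfin : exists s0, forall j, j < n -> forall t, s0 <= t ->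
            min_approx (es j) t = min_approx (es j) s0).
  { induction n as [|n [s0 H]]; [exists 0; intros; lia|].
    destruct (min_approx_settles (es n)) as [a [s [Ha _]]].
    exists (Nat.max s0 s). intros j Hj t Ht. destruct (Nat.eq_dec j n) as [->|].
    - rewrite (Ha t), (Ha (Nat.max s0 s)); lia.
    - rewrite (H j ltac:(lia) t), (H j ltac:(lia) (Nat.max s0 s)); lia. }
  destruct Hfin as [s0 Hs0].
  destruct (last_change_settles (approx_changed es n) s0) as [L [H1 [H2 H3]]].
  { intros t Ht. apply not_true_is_false. intros Hx. apply exists_below_spec in Hx as [j [Hj Hx]].
    rewrite (Hs0 j Hj t), (Hs0 j Hj (S t)), Nat.eqb_refl in Hx by lia. discriminate. }
  assert (Hstep : forall j, j < n -> forall t, approx_changed es n t = false ->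
            min_approx (es j) (S t) = min_approx (es j) t).
  { intros j Hj t Hc. apply Nat.eqb_eq, negb_false_iff, not_true_is_false. intros E.
    enough (approx_changed es n t = true) by congruence. apply exists_below_spec. eauto. }
  exists (fun j => min_approx (es j) s0), L. split; [|split; [auto|split; [auto|]]].
  - intros j Hj t Ht. rewrite (constant_after _ _ L H3 (Hstep j Hj) t Ht).
    rewrite <- (constant_after _ _ L H3 (Hstep j Hj) (Nat.max L s0)) by lia. apply Hs0; lia.
  - intros j Hj w. destruct (min_approx_settles (es j)) as [a [s [Ha Ha']]]. rewrite Ha'.
    rewrite <- (Hs0 j Hj (Nat.max s0 s)), Ha by lia. reflexivity.
Qed.

(** * [E_max] is not binarily reducible to [E_min] *)

Lemma computable2_Computable2 f : computable2 f -> Computable2 f.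
Proof.
  intros [p Hp]. exists p. intros [|x [|y [|]]] Hv; simpl in Hv; try lia. apply Hp.
Qed.

Definition pair_family (u v j : nat) : nat := if j =? 0 then u else v.

#[export] Instance Computable3_pair_family : Computable3 pair_family.
Proof. unfold Computable3, pair_family. prove_computable. Qed.

(* Stage [s] of the enumeration of [W (spec_code a a i)], where [u], [v] are the images of
   [spec_code a a 0], [spec_code a a 1] under the reduction. *)
Definition diagonal_stage (f g : nat -> nat -> nat) (a i s : nat) : nat :=
  let u := f (spec_code a a 0) (spec_code a a 1) in
  let v := g (spec_code a a 0) (spec_code a a 1) in
  2 * last_change (approx_changed (pair_family u v) 2) s +
  (if (i =? 0) && (min_approx u s =? min_approx v s) then 1 else 0).

Theorem not_red2_E_max_E_min : ~ red2 E_max E_min.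
Proof.
  intros [f [g [Cf [Cg Hred]]]].
  apply computable2_Computable2 in Cf, Cg.
  assert (HF : Computable3 (diagonal_stage f g)).
  { unfold Computable3, diagonal_stage, approx_changed, last_change. prove_computable. }
  (* Taking [b := a] below is the recursion theorem: the sets know their own indices. *)
  destruct (enumerable_range _ HF) as [a Ha].
  set (e0 := spec_code a a 0) in *. set (e1 := spec_code a a 1) in *.
  set (u := f e0 e1). set (v := g e0 e1).
  destruct (approx_family_settles (pair_family u v) 2) as [A [L [Hst [HL1 [HL2 Hmin]]]]].
  assert (Hu : forall t, L <= t -> min_approx u t = A 0) by exact (Hst 0 ltac:(lia)).
  assert (Hv : forall t, L <= t -> min_approx v t = A 1) by exact (Hst 1 ltac:(lia)).
  set (b := if A 0 =? A 1 then 1 else 0).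
  assert (Hmax : forall i, maxW (spec_code a a i) (Fin (2 * L + if i =? 0 then b else 0))).
  { intros i. apply (maxW_range _ (diagonal_stage f g a i) _ L (Ha a i)).
    - intros s Hs. unfold diagonal_stage; cbv zeta; fold e0 e1 u v. rewrite (HL1 s Hs).
      rewrite (Hu s Hs), (Hv s Hs). now destruct i.
    - intros s Hs. unfold diagonal_stage; cbv zeta; fold e0 e1 u v.
      pose proof (HL2 s Hs). destruct (_ && _); lia. }
  pose proof (E_max_Fin _ _ _ _ (Hmax 0) (Hmax 1)) as HEmax.
  pose proof (E_min_decode _ _ _ _ (Hmin 0 ltac:(lia)) (Hmin 1 ltac:(lia))) as HEmin.
  specialize (Hred e0 e1). fold u v in Hred. cbn in HEmin.
  unfold b in HEmax. destruct (Nat.eqb_spec (A 0) (A 1)) as [Heq|Hne]; cbn [Nat.eqb] in HEmax.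
  - assert (E_max e0 e1) as H by (apply Hred, HEmin, Heq). apply HEmax in H. lia.
  - assert (E_max e0 e1) as H by (apply HEmax; lia). now apply Hred, HEmin in H.
Qed.

(** * [E_min] is finitarily reducible to [E_max] *)

(* The strict order of the minima coded by [min_approx], in which the code [0] stands for
   [+oo] and is the largest. *)
Definition min_code_lt (a b : nat) : bool := negb (a =? 0) && ((b =? 0) || (a <? b)).

Lemma min_code_lt_irrefl a : min_code_lt a a = false.
Proof. unfold min_code_lt. destruct (a =? 0); simpl; auto. apply Nat.ltb_irrefl. Qed.

Lemma min_code_lt_trans a b c :
  min_code_lt a b = true -> min_code_lt b c = true -> min_code_lt a c = true.
Proof.
  unfold min_code_lt. rewrite !andb_true_iff, !orb_true_iff, !negb_true_iff, !Nat.eqb_eq,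
    !Nat.eqb_neq, !Nat.ltb_lt. lia.
Qed.

Lemma min_code_lt_total a b : a <> b -> min_code_lt a b = true \/ min_code_lt b a = true.
Proof.
  unfold min_code_lt. rewrite !andb_true_iff, !orb_true_iff, !negb_true_iff, !Nat.eqb_eq,
    !Nat.eqb_neq, !Nat.ltb_lt. lia.
Qed.

Lemma rank_inj n (A : nat -> nat) i j : i < n -> j < n ->
  (count_below n (fun k => min_code_lt (A k) (A i)) =
   count_below n (fun k => min_code_lt (A k) (A j)) <-> A i = A j).
Proof.
  intros Hi Hj. split; [|now intros ->].
  intros H. destruct (Nat.eq_dec (A i) (A j)) as [|Hne]; auto. exfalso.
  destruct (min_code_lt_total _ _ Hne) as [Hl|Hl].
  - enough (count_below n (fun k => min_code_lt (A k) (A i)) <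
            count_below n (fun k => min_code_lt (A k) (A j))) by lia.
    apply count_below_lt; [eauto using min_code_lt_trans|].
    exists i. auto using min_code_lt_irrefl.
  - enough (count_below n (fun k => min_code_lt (A k) (A j)) <
            count_below n (fun k => min_code_lt (A k) (A i))) by lia.
    apply count_below_lt; [eauto using min_code_lt_trans|].
    exists j. auto using min_code_lt_irrefl.
Qed.

Definition rank_at (c i s : nat) : nat :=
  count_below (code_length c)
    (fun j => min_code_lt (min_approx (code_nth j c) s) (min_approx (code_nth i c) s)).

(* Stage [s] of the enumeration of the [i]-th output set, for the input tuple coded by [c]. *)
Definition finitary_stage (c i s : nat) : nat :=
  last_change (approx_changed (fun j => code_nth j c) (code_length c)) s * code_length c +
  rank_at c i s.

#[export] Instance BComputable2_min_code_lt : BComputable2 min_code_lt.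
Proof. unfold BComputable2, min_code_lt. prove_computable. Qed.
#[export] Instance Computable3_rank_at : Computable3 rank_at.
Proof. unfold Computable3, rank_at. prove_computable. Qed.
#[export] Instance Computable3_finitary_stage : Computable3 finitary_stage.
Proof. unfold Computable3, finitary_stage, approx_changed, last_change. prove_computable. Qed.

Lemma code_nats_map_seq (F : nat -> nat) n k : k <= n ->
  prim_rec (fun k acc => code_cons (F (n - S k)) acc) 0 k = code_nats (map F (seq (n - k) k)).
Proof.
  induction k; intros H; [reflexivity|].
  simpl. rewrite IHk by lia. unfold code_cons. simpl.
  now replace (S (n - S k)) with (n - k) by lia.
Qed.

Lemma computable_map_tuple (h : nat -> nat -> nat) : Computable2 h ->
  exists p, forall l, eval p [code_nats l] (code_nats (map (h (code_nats l)) (seq 0 (length l)))).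
Proof.
  intros Hh.
  assert (HG : computable 1 (fun u => prim_rec (fun k acc =>
    code_cons (h (nth 0 u 0) (code_length (nth 0 u 0) - S k)) acc) 0 (code_length (nth 0 u 0))))
    by prove_computable.
  destruct HG as [p Hp]. exists p. intros l. specialize (Hp [code_nats l] eq_refl).
  cbn [nth] in Hp. rewrite code_length_code_nats, code_nats_map_seq, Nat.sub_diag in Hp by lia.
  exact Hp.
Qed.

Lemma finitary_max a c :
  (forall b i x, W (spec_code a b i) x <-> exists s, x = finitary_stage b i s) ->
  exists (A : nat -> nat) L,
    (forall i, i < code_length c -> maxW (spec_code a c i)
       (Fin (L * code_length c +
             count_below (code_length c) (fun j => min_code_lt (A j) (A i))))) /\
    (forall i, i < code_length c -> forall w, minW (code_nth i c) w <-> w = decode_min (A i)).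
Proof.
  intros Ha. set (n := code_length c).
  destruct (approx_family_settles (fun j => code_nth j c) n) as [A [L [Hst [HL1 [HL2 Hmin]]]]].
  exists A, L. split; auto. intros i Hi.
  assert (Hrank : forall s, rank_at c i s < n).
  { intros s. apply (count_below_lt_bound _ _ i Hi), min_code_lt_irrefl. }
  apply (maxW_range _ (finitary_stage c i) _ L (Ha c i)).
  - intros s Hs. unfold finitary_stage. fold n. rewrite HL1 by auto. f_equal.
    apply count_below_ext. intros j Hj. now rewrite !Hst.
  - intros s Hs. unfold finitary_stage. fold n. specialize (HL2 s Hs). specialize (Hrank s).
    assert (last_change (approx_changed (fun j => code_nth j c) n) s * n <= (L - 1) * n)
      by (apply Nat.mul_le_mono_r; lia).
    destruct L; [lia|]. simpl in *. rewrite Nat.sub_0_r in *. lia.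
Qed.

Theorem red_fin_E_min_E_max : red_fin E_min E_max.
Proof.
  destruct (enumerable_range finitary_stage _) as [a Ha].
  destruct (computable_map_tuple (spec_code a)) as [p Hp].
  { unfold Computable2. prove_computable. }
  exists (fun l => map (spec_code a (code_nats l)) (seq 0 (length l))). split; [eauto|].
  intros l. rewrite length_map, length_seq. split; auto. intros i j Hij Hj.
  assert (Hnth : forall k, k < length l ->
    nth k (map (spec_code a (code_nats l)) (seq 0 (length l))) 0 = spec_code a (code_nats l) k).
  { intros k Hk. rewrite nth_indep with (d' := spec_code a (code_nats l) 0)
      by now rewrite length_map, length_seq.
    now rewrite map_nth, seq_nth. }
  rewrite !Hnth by lia.
  destruct (finitary_max a (code_nats l) Ha) as [A [L [Hmax Hmin]]].
  rewrite code_length_code_nats in Hmax, Hmin.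
  rewrite (E_max_Fin _ _ _ _ (Hmax i ltac:(lia)) (Hmax j ltac:(lia))).
  rewrite <- !code_nth_code_nats, (E_min_decode _ _ _ _ (Hmin i ltac:(lia)) (Hmin j ltac:(lia))).
  rewrite <- (rank_inj (length l) A i j) by lia. lia.
Qed.

Theorem proposition4p1 : ~ red2 E_max E_min /\ red_fin E_min E_max.
Proof. exact (conj not_red2_E_max_E_min red_fin_E_min_E_max). Qed.
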